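(* For $q\ge p\ge2$, $\mathrm{Z}_+(K_{p,q})=p$ and $\overline{\mathrm{Z}}_+(K_{p,q})=q$. If $p\ge3$, then $z^+_0(K_{p,q})=p+q-2$; in particular, for $p\ge4$, $z^+_0(K_{p,p})=2p-2>\overline{\mathrm{Z}}_+(K_{p,p})+1$. For $q\ge4$, $\underline{z^+_0}(K_{2,q})=3$ and $z^+_0(K_{2,q})=q+1$.
   Context: All graphs are finite, simple, undirected. PSD color change rule: with $B$ the set of blue vertices and $W=V(G)\setminus B$ the white vertices, let $W_1,\dots,W_k$ be the vertex sets of the connected components of $G[W]$; if $u\in B$, $w\in W_i$, and $w$ is the only white neighbor of $u$ in $G[W_i\cup B]$, then $u$ may color $w$ blue. $S$ is a PSD forcing set if starting with exactly $S$ blue and applying the rule repeatedly, all vertices become blue. $\mathrm{Z}_+(G)$ is the minimum cardinality of a PSD forcing set and $\overline{\mathrm{Z}}_+(G)$ the maximum cardinality of an inclusion-minimal PSD forcing set. $\mathfrak{Z}^+(G)$ has as vertices the PSD forcing sets, with $S_1S_2$ an edge iff $|S_1\ominus S_2|=1$; $\mathfrak{Z}^+_k(G)$ is its subgraph induced by PSD forcing sets of size at most $k$. $z^+_0(G)$ is the least $k_0$ with $\mathfrak{Z}^+_k(G)$ connected for all $k\ge k_0$; $\underline{z^+_0}(G)$ is the least $k$ with $\mathfrak{Z}^+_k(G)$ connected. $K_{p,q}$ is the complete bipartite graph with parts of sizes $p,q$. *)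

From Stdlib Require Import Relations.
From mathcomp Require Import all_boot.
Set Implicit Arguments. Unset Strict Implicit. Unset Printing Implicit Defensive.

Section PSD.
Variables (T : finType) (e : rel T).

Definition white_rel (B : {set T}) : rel T :=
  [rel x y | [&& e x y, x \notin B & y \notin B]].

Definition psd_force (B : {set T}) (u w : T) : bool :=
  [&& u \in B, w \notin B, e u w &
      [forall x, [&& x \notin B, e u x & connect (white_rel B) w x] ==> (x == w)]].

Inductive psd_reach (S : {set T}) : {set T} -> Prop :=
| psd_reach_base : psd_reach S S
| psd_reach_step B u w : psd_reach S B -> psd_force B u w -> psd_reach S (w |: B).

Definition psd_forcing_set (S : {set T}) : Prop := psd_reach S setT.

Definition is_Zplus (k : nat) : Prop :=
  (exists S, psd_forcing_set S /\ #|S| = k) /\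
  (forall S, psd_forcing_set S -> k <= #|S|).

Definition minimal_psd_forcing_set (S : {set T}) : Prop :=
  psd_forcing_set S /\ (forall S' : {set T}, S' \proper S -> ~ psd_forcing_set S').

Definition is_Zplus_bar (k : nat) : Prop :=
  (exists S, minimal_psd_forcing_set S /\ #|S| = k) /\
  (forall S, minimal_psd_forcing_set S -> #|S| <= k).

(* adjacency in the token addition/removal graph Z^+_k(G) *)
Definition tar_adj (k : nat) (S1 S2 : {set T}) : Prop :=
  [/\ psd_forcing_set S1, #|S1| <= k, psd_forcing_set S2, #|S2| <= k &
      #|(S1 :\: S2) :|: (S2 :\: S1)| = 1].

(* Z^+_k(G) is connected (a connected graph is nonempty) *)
Definition tar_connected (k : nat) : Prop :=
  (exists S, psd_forcing_set S /\ #|S| <= k) /\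
  (forall S1 S2, psd_forcing_set S1 -> #|S1| <= k ->
                 psd_forcing_set S2 -> #|S2| <= k ->
                 clos_refl_trans _ (tar_adj k) S1 S2).

Definition is_z0plus (k0 : nat) : Prop :=
  (forall k, k0 <= k -> tar_connected k) /\
  (forall k1, (forall k, k1 <= k -> tar_connected k) -> k0 <= k1).

Definition is_uz0plus (k0 : nat) : Prop :=
  tar_connected k0 /\ (forall k, tar_connected k -> k0 <= k).

End PSD.

Definition Kpq (p q : nat) : rel ('I_p + 'I_q)%type :=
  fun x y => match x, y with
             | inl _, inr _ | inr _, inl _ => true
             | _, _ => false
             end.
Arguments Kpq : clear implicits.

(* In K_{p,q} (p, q >= 2) a blue vertex u can force a white w only if, on the side of w,
   no other vertex is white or the other side is entirely blue: two white vertices of one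
   side are joined through any white vertex of the other side, so u would see two white
   neighbours in one white component. Hence S is a PSD forcing set iff on some side at
   most one vertex is white, and if one is, the other side carries a blue vertex. Everything
   is thus governed by the numbers (a, b) of blue vertices on the two sides, and an edge of
   the token graph changes (a, b) by a unit step. Above the thresholds every forcing set
   walks to the left side X, one unit step at a time; below p + q - 2 (resp. q + 1 when
   p = 2) the condition a >= p - 1 cannot be left, separating X from the right side; and
   X is an isolated vertex of Z^+_p. *)

From Stdlib Require Import Relations.
From mathcomp Require Import all_boot zify.
Set Implicit Arguments. Unset Strict Implicit. Unset Printing Implicit Defensive.

Section ReflTransClosure.
Variables (A : Type) (R : relation A).

Lemma clos_rt_sym : (forall x y, R x y -> R y x) ->
  forall x y, clos_refl_trans A R x y -> clos_refl_trans A R y x.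
Proof.
move=> symR x y; elim=> [u v /symR|u|u v w _ IHuv _ IHvw].
- exact: rt_step.
- exact: rt_refl.
- exact: (rt_trans _ _ _ _ _ IHvw IHuv).
Qed.

Lemma clos_rt_descent (P : A -> Prop) (f : A -> nat) (h : A) :
  (forall x, P x -> x = h \/ exists y, [/\ R x y, P y & f y < f x]) ->
  forall x, P x -> clos_refl_trans A R x h.
Proof.
move=> down x; have [n] := ubnP (f x); elim: n x => // n IH x fx_lt Px.
have [->|[y [Rxy Py fy_lt]]] := down x Px; first exact: rt_refl.
exact: (rt_trans _ _ _ _ _ (rt_step _ _ _ _ Rxy) (IH y (leq_trans fy_lt (ltnSE fx_lt)) Py)).
Qed.

End ReflTransClosure.

Section FinsetCounts.
Variable T : finType.
Implicit Types (x : T) (S A : {set T}).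

Lemma card_setD1I x S A : x \in S -> #|(S :\ x) :&: A| = #|S :&: A| - (x \in A).
Proof.
move=> xS; rewrite [#|S :&: A|](cardsD1 x) inE xS addKn.
by congr #|pred_of_set _|; apply/setP=> y; rewrite !inE andbA.
Qed.

Lemma card_setU1I x S A : x \notin S -> #|(x |: S) :&: A| = (x \in A) + #|S :&: A|.
Proof.
move=> xS; case: (boolP (x \in A)) => xA.
  have -> : (x |: S) :&: A = x |: (S :&: A).
    by apply/setP=> y; rewrite !inE; case: eqP => // ->.
  by rewrite cardsU1 inE (negbTE xS).
rewrite add0n; congr #|pred_of_set _|; apply/setP=> y; rewrite !inE.
by case: eqP => [->|]; rewrite ?(negbTE xA) ?andbF.
Qed.

Lemma symdiff_setD1 x S : x \in S -> #|(S :\: (S :\ x)) :|: ((S :\ x) :\: S)| = 1.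
Proof.
move=> xS; rewrite -(cards1 x); congr #|pred_of_set _|; apply/setP=> y; rewrite !inE.
by case: eqP => [->|_]; rewrite ?xS ?andbT ?andbF //=; case: (y \in S).
Qed.

Lemma symdiff_card1 S1 S2 : #|(S1 :\: S2) :|: (S2 :\: S1)| = 1 ->
  exists x, (x \in S1 /\ S2 = S1 :\ x) \/ (x \in S2 /\ S1 = S2 :\ x).
Proof.
move/eqP/cards1P=> [x Dx]; exists x.
have inD y : ((y \in S1) != (y \in S2)) = (y == x).
  by rewrite -in_set1 -Dx !inE; case: (y \in S1); case: (y \in S2).
have same y : y != x -> (y \in S1) = (y \in S2).
  by rewrite -inD => /negbNE/eqP.
have := inD x; rewrite eqxx.
case S1x: (x \in S1); case S2x: (x \in S2) => // _; [left | right]; split=> //;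
  apply/setP=> y; rewrite !inE; case: eqP => [->|/eqP/same]; rewrite ?S1x ?S2x //.
Qed.

End FinsetCounts.

Section PSDForcing.
Variables (T : finType) (e : rel T).
Implicit Types (S B : {set T}) (u w : T).

Lemma psd_force_unique B u w : u \in B -> w \notin B -> e u w ->
  (forall x, x \notin B -> e u x -> x = w) -> psd_force e B u w.
Proof.
move=> uB wB euw only_w; rewrite /psd_force uB wB euw /=.
by apply/forallP=> x; apply/implyP=> /and3P[xB eux _]; rewrite (only_w x xB eux).
Qed.

Lemma psd_force_isolated B u w : u \in B -> w \notin B -> e u w ->
  (forall y, e w y -> y \in B) -> psd_force e B u w.
Proof.
move=> uB wB euw Nw; rewrite /psd_force uB wB euw /=.
apply/forallP=> x; apply/implyP=> /and3P[_ _ /connectP[[|y s] /= wpath ->]] //.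
by case/andP: wpath => /and3P[/Nw -> _].
Qed.

Lemma psd_forcing_saturate S B : psd_reach e S B ->
  (forall B', B \subset B' -> forall w, w \notin B' -> exists u, psd_force e B' u w) ->
  psd_forcing_set e S.
Proof.
move=> reachB force_out.
have [n] := ubnP #|~: B|; elim: n B reachB force_out => // n IH B reachB force_out.
rewrite ltnS => szB.
case: (pickP [pred w | w \notin B]) => [w /= wB | full]; last first.
  rewrite /psd_forcing_set (_ : setT = B) //.
  by apply/setP=> x; rewrite inE; apply/esym/negbFE/full.
have [u fuw] := force_out B (subxx B) w wB.
apply: (IH (w |: B)) => [|B' sB' |]; first exact: psd_reach_step fuw.
  exact: force_out (subset_trans (subsetU1 w B) sB').
have := cardsC (w |: B); have := cardsC B; rewrite cardsU1 wB; lia.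
Qed.

Lemma is_Zplus_bar_unique k1 k2 : is_Zplus_bar e k1 -> is_Zplus_bar e k2 -> k1 = k2.
Proof.
move=> [[S1 [min1 <-]] max1] [[S2 [min2 <-]] max2].
by apply/eqP; rewrite eqn_leq max1 ?max2.
Qed.

Local Notation tar_path k := (clos_refl_trans _ (tar_adj e k)).

Lemma tar_adj_sym k S1 S2 : tar_adj e k S1 S2 -> tar_adj e k S2 S1.
Proof. by case=> *; split=> //; rewrite setUC. Qed.

Lemma tar_adj_setD1 k S x : x \in S -> psd_forcing_set e S ->
  psd_forcing_set e (S :\ x) -> #|S| <= k -> tar_adj e k S (S :\ x).
Proof.
move=> xS FS FSx szS; split=> //; last exact: symdiff_setD1.
exact: leq_trans (subset_leq_card (subD1set S x)) szS.
Qed.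

Lemma tar_adj_setU1 k S x : x \notin S -> psd_forcing_set e S ->
  psd_forcing_set e (x |: S) -> #|x |: S| <= k -> tar_adj e k S (x |: S).
Proof.
move=> xS FS FSx szSx; apply: tar_adj_sym.
by rewrite -{2}(setU1K xS); apply: tar_adj_setD1; rewrite ?setU1K ?setU11.
Qed.

Lemma tar_connected_hub k H : psd_forcing_set e H -> #|H| <= k ->
  (forall S, psd_forcing_set e S -> #|S| <= k -> tar_path k S H) ->
  tar_connected e k.
Proof.
move=> FH szH to_hub; split=> [|S1 S2 F1 sz1 F2 sz2]; first by exists H.
apply: (rt_trans _ _ _ _ _ (to_hub S1 F1 sz1)).
exact: clos_rt_sym (@tar_adj_sym k) _ _ (to_hub S2 F2 sz2).
Qed.

Lemma tar_disconnected k (I : {set T} -> Prop) S1 S2 :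
  (forall S S', tar_adj e k S S' -> I S -> I S') ->
  psd_forcing_set e S1 -> #|S1| <= k -> I S1 ->
  psd_forcing_set e S2 -> #|S2| <= k -> ~ I S2 -> ~ tar_connected e k.
Proof.
move=> adjI F1 sz1 I1 F2 sz2 notI2 [_ conn]; apply: notI2.
elim: (conn S1 S2 F1 sz1 F2 sz2) I1 => [S S' /adjI //| // | S S' S'' _ IH1 _ IH2].
by move/IH1/IH2.
Qed.

Lemma is_z0plus_threshold k0 : 0 < k0 ->
  (forall k, k0 <= k -> tar_connected e k) -> ~ tar_connected e k0.-1 ->
  is_z0plus e k0.
Proof.
move=> k0_gt0 conn not_conn; split=> // k1 conn1.
by rewrite leqNgt; apply/negP=> k1_lt; apply: not_conn; apply: conn1; lia.
Qed.

End PSDForcing.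

Section CompleteBipartite.
Variables (T : finType) (e : rel T).
Implicit Types (X Z S B : {set T}) (u w : T).

Definition complete_bipartite X := forall x y, e x y = ((x \in X) != (y \in X)).

Lemma complete_bipartiteC X : complete_bipartite X -> complete_bipartite (~: X).
Proof. by move=> eX x y; rewrite eX !inE; case: (x \in X); case: (y \in X). Qed.

Definition nearly_blue Z S : bool :=
  (#|Z :\: S| == 0) || (#|Z :\: S| == 1) && (0 < #|S :\: Z|).

Lemma psd_forcing_side_blue Z S B : complete_bipartite Z -> Z != set0 ->
  psd_reach e S B -> Z \subset B -> psd_forcing_set e S.
Proof.
move=> eZ /set0Pn[u uZ] reachB sZB; apply: psd_forcing_saturate reachB _ => B' sBB' w wB'.
have sZB' := subset_trans sZB sBB'.
have wZ : w \notin Z by apply: contra wB'; apply: (subsetP sZB').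
exists u; apply: psd_force_isolated => //; first exact: (subsetP sZB').
  by rewrite eZ uZ.
by move=> y; rewrite eZ (negbTE wZ); case yZ: (y \in Z) => // _; apply: (subsetP sZB').
Qed.

Lemma psd_forcing_nearly_blue Z S : complete_bipartite Z -> Z != set0 ->
  nearly_blue Z S -> psd_forcing_set e S.
Proof.
move=> eZ Z0 /orP[|/andP[/cards1P[z Dz]]].
  by rewrite cards_eq0 setD_eq0; apply: psd_forcing_side_blue (psd_reach_base _ _).
rewrite card_gt0 => /set0Pn[u]; rewrite inE => /andP[uZ uS].
have white_Z x : x \in Z -> x \notin S -> x = z.
  by move=> xZ xS; apply/set1P; rewrite -Dz inE xS.
have /setDP[zZ zS] : z \in Z :\: S by rewrite Dz set11.
apply: (psd_forcing_side_blue eZ Z0 (psd_reach_step (psd_reach_base _ _) _)).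
  apply: (psd_force_unique uS zS); first by rewrite eZ (negbTE uZ) zZ.
  by move=> x xS; rewrite eZ (negbTE uZ); case xZ: (x \in Z) => // _; apply: white_Z.
apply/subsetP=> x xZ; rewrite !inE; case: (boolP (x \in S)); first by rewrite orbT.
by move/(white_Z x xZ)->; rewrite eqxx.
Qed.

Lemma psd_force_nearly_blue Z B u w : complete_bipartite Z ->
  psd_force e B u w -> nearly_blue Z B || nearly_blue (~: Z) B.
Proof.
move=> eZ fuw; wlog wZ : Z eZ / w \in Z.
  move=> H; case: (boolP (w \in Z)) => wZ; first exact: H Z eZ wZ.
  by have := H _ (complete_bipartiteC eZ); rewrite setCK inE orbC; apply.
case/and4P: fuw => uB wB euw /forallP only_w.
have uZ : u \notin Z by move: euw; rewrite eZ wZ; case: (u \in Z).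
have uBZ : 0 < #|B :\: Z| by rewrite card_gt0; apply/set0Pn; exists u; rewrite inE uZ.
apply: contraT; rewrite negb_or /nearly_blue uBZ andbT => /andP[nbZ nbC].
have /set0Pn[k] : ~: Z :\: B != set0 by rewrite -cards_eq0; move: nbC; case: eqP.
rewrite !inE => /andP[kB kZ].
have /set0Pn[w'] : (Z :\: B) :\ w != set0.
  by rewrite -card_gt0; move: nbZ; rewrite (cardsD1 w) !inE wZ wB /=; lia.
rewrite !inE => /and3P[w'w w'B w'Z].
have white_edge x y : x \notin B -> y \notin B -> (x \in Z) != (y \in Z) ->
    connect (white_rel e B) x y.
  by move=> xB yB xy; apply: connect1; rewrite /white_rel /= eZ xy xB yB.
have ww' : connect (white_rel e B) w w'.
  apply: (connect_trans (white_edge w k _ _ _) (white_edge k w' _ _ _)) => //.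
    by rewrite wZ (negbTE kZ).
  by rewrite w'Z (negbTE kZ).
by have := only_w w'; rewrite w'B eZ (negbTE uZ) w'Z ww' (negbTE w'w).
Qed.

Lemma psd_forcing_bipartiteP X S : complete_bipartite X -> X != set0 -> ~: X != set0 ->
  psd_forcing_set e S <-> nearly_blue X S || nearly_blue (~: X) S.
Proof.
move=> eX X0 XC0; split=> [reachT|/orP[]]; last 2 first.
- exact: psd_forcing_nearly_blue.
- exact: psd_forcing_nearly_blue (complete_bipartiteC eX) XC0.
suff [<-|//] : setT = S \/ nearly_blue X S || nearly_blue (~: X) S.
  by rewrite /nearly_blue setDT cards0.
elim: reachT => [|B u w _ IH fuw]; first by left.
right; case: IH => [eqBS|//]; rewrite -eqBS.
exact: psd_force_nearly_blue eX fuw.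
Qed.

End CompleteBipartite.

Section CompleteBipartiteCounts.
Variables (T : finType) (e : rel T) (X : {set T}) (m n : nat).
Hypotheses (eX : complete_bipartite e X) (card_X : #|X| = m) (card_Xc : #|~: X| = n).
Hypotheses (m_ge2 : 2 <= m) (n_ge2 : 2 <= n) (m_le_n : m <= n).
Implicit Types (S : {set T}) (x : T).
Local Notation tar_path k := (clos_refl_trans _ (tar_adj e k)).

Definition forcing_counts a b : bool :=
  [|| a == m, (a == m.-1) && (0 < b), b == n | (b == n.-1) && (0 < a)].

Lemma card_split S : #|S| = #|S :&: X| + #|S :&: ~: X|.
Proof. by rewrite -setDE cardsID. Qed.

Lemma counts_le S : #|S :&: X| <= m /\ #|S :&: ~: X| <= n.
Proof. by rewrite -card_X -card_Xc !subset_leq_card ?subsetIr. Qed.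

Lemma psd_forcing_counts S :
  psd_forcing_set e S <-> forcing_counts #|S :&: X| #|S :&: ~: X|.
Proof.
rewrite (psd_forcing_bipartiteP _ eX) -?card_gt0 ?card_X ?card_Xc; try lia.
rewrite /nearly_blue !cardsD card_X card_Xc [X :&: S]setIC [~: X :&: S]setIC.
have := card_split S; have [] := counts_le S; rewrite /forcing_counts; lia.
Qed.

Lemma counts_setD1 S x : x \in S ->
  #|(S :\ x) :&: X| = #|S :&: X| - (x \in X) /\
  #|(S :\ x) :&: ~: X| = #|S :&: ~: X| - (x \notin X).
Proof. by move=> xS; rewrite !card_setD1I // inE. Qed.

Lemma counts_setU1 S x : x \notin S ->
  #|(x |: S) :&: X| = (x \in X) + #|S :&: X| /\
  #|(x |: S) :&: ~: X| = (x \notin X) + #|S :&: ~: X|.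
Proof. by move=> xS; rewrite !card_setU1I // inE. Qed.

Lemma counts_X : #|X :&: X| = m /\ #|X :&: ~: X| = 0.
Proof. by rewrite setIid setICr cards0 card_X. Qed.

Lemma counts_Xc : #|~: X :&: X| = 0 /\ #|~: X :&: ~: X| = n.
Proof. by rewrite setIid setIC setICr cards0 card_Xc. Qed.

Lemma eq_X_of_counts S : #|S :&: X| = m -> #|S :&: ~: X| = 0 -> S = X.
Proof.
move=> aS /eqP; rewrite cards_eq0 -setDE setD_eq0 => sSX.
apply/eqP; rewrite eqEcard sSX /= card_X -aS.
exact/subset_leq_card/subsetIl.
Qed.

Lemma psd_forcing_X : psd_forcing_set e X.
Proof.
by apply/psd_forcing_counts; have [-> ->] := counts_X; rewrite /forcing_counts eqxx.
Qed.

Lemma psd_forcing_Xc : psd_forcing_set e (~: X).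
Proof.
by apply/psd_forcing_counts; have [-> ->] := counts_Xc; rewrite /forcing_counts eqxx !orbT.
Qed.

Lemma is_Zplus_complete_bipartite : is_Zplus e m.
Proof.
split=> [|S /psd_forcing_counts FS].
  by exists X; split; [exact: psd_forcing_X | exact: card_X].
by have := card_split S; have [] := counts_le S; move: FS; rewrite /forcing_counts; lia.
Qed.

Lemma minimal_psd_forcing_card_le S : minimal_psd_forcing_set e S -> #|S| <= n.
Proof.
move=> [FS min_S]; rewrite leqNgt; apply/negP=> n_lt_S.
move/psd_forcing_counts: FS; have := card_split S; have [aS bS] := counts_le S => szS FS.
have [x xS Fx] : exists2 x, x \in S & forcing_counts #|(S :\ x) :&: X| #|(S :\ x) :&: ~: X|.
  have [[/card_gt0P[x /setIP[xS xXc]] Fb] | [/card_gt0P[x /setIP[xS xX]] Fa]] :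
      (0 < #|S :&: ~: X| /\ forcing_counts #|S :&: X| (#|S :&: ~: X|).-1) \/
      (0 < #|S :&: X| /\ forcing_counts (#|S :&: X|).-1 #|S :&: ~: X|).
    by move: FS; rewrite /forcing_counts; lia.
  - exists x => //; have [-> ->] := counts_setD1 xS.
    by move: xXc; rewrite inE => /negbTE ->; rewrite subn0 subn1.
  - exists x => //; have [-> ->] := counts_setD1 xS.
    by rewrite xX subn0 subn1.
by apply: (min_S (S :\ x)); [exact: properD1 | exact/psd_forcing_counts].
Qed.

Lemma is_Zplus_bar_complete_bipartite : is_Zplus_bar e n.
Proof.
split=> [|S]; last exact: minimal_psd_forcing_card_le.
exists (~: X); split; last by rewrite card_Xc.
split=> [|S sSXc /psd_forcing_counts]; first exact: psd_forcing_Xc.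
have aS : #|S :&: X| <= #|~: X :&: X| by apply/subset_leq_card/setSI/proper_sub.
have := proper_card sSXc; have [a0 _] := counts_Xc.
rewrite card_Xc card_split /forcing_counts; lia.
Qed.

Lemma forcing_counts_toward_X k a b : a <= m -> b <= n -> forcing_counts a b ->
  a + b <= k -> m < k -> k < n \/ maxn (m + n - 2) n.+1 <= k ->
  (a = m /\ b = 0) \/ (0 < b /\ forcing_counts a b.-1) \/
  (a < m /\ forcing_counts a.+1 b /\ a + b < k).
Proof. rewrite /forcing_counts; lia. Qed.

Lemma tar_path_to_X k S : m < k -> k < n \/ maxn (m + n - 2) n.+1 <= k ->
  psd_forcing_set e S -> #|S| <= k -> tar_path k S X.
Proof.
move=> m_lt_k k_range FS szS.
(* [dist S] is the size of the symmetric difference of [S] and [X]. *)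
pose dist S := m - #|S :&: X| + #|S :&: ~: X|.
pose P S := psd_forcing_set e S /\ #|S| <= k.
apply: (clos_rt_descent (P := P) (f := dist)) (conj FS szS).
move=> {FS szS} S [FS szS]; have [aS bS] := counts_le S.
have /psd_forcing_counts FcS := FS; have szSc := szS; rewrite card_split in szSc.
have [[aSm bS0] | [[b_gt0 Fc'] | [aS_lt_m [Fc' szS_lt]]]] :=
  forcing_counts_toward_X aS bS FcS szSc m_lt_k k_range.
- by left; apply: eq_X_of_counts.
- have /card_gt0P[x /setIP[xS]] := b_gt0; rewrite inE => xX.
  right; have [aS' bS'] := counts_setD1 xS.
  rewrite (negbTE xX) /= subn0 subn1 in aS' bS'.
  have FS' : psd_forcing_set e (S :\ x) by apply/psd_forcing_counts; rewrite aS' bS'.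
  exists (S :\ x); split; first exact: tar_adj_setD1.
    by split=> //; have := card_split (S :\ x); lia.
  by rewrite /dist aS' bS'; lia.
- have /card_gt0P[x /setDP[xX xS]] : 0 < #|X :\: S| by rewrite cardsD card_X setIC; lia.
  have [aS' bS'] := counts_setU1 xS; rewrite xX /= in aS' bS'.
  have FS' : psd_forcing_set e (x |: S) by apply/psd_forcing_counts; rewrite aS' bS'.
  have szS' : #|x |: S| <= k by have := card_split (x |: S); lia.
  right; exists (x |: S); split=> //; first exact: tar_adj_setU1.
  by rewrite /dist aS' bS'; lia.
Qed.

Lemma tar_connected_complete_bipartite k : m < k ->
  k < n \/ maxn (m + n - 2) n.+1 <= k -> tar_connected e k.
Proof.
move=> m_lt_k k_range; apply: (tar_connected_hub psd_forcing_X); first by rewrite card_X ltnW.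
by move=> S; apply: tar_path_to_X.
Qed.

(* With truncated subtraction, [(x - y) + (y - x)] is [|x - y|]. *)
Lemma tar_adj_counts k S1 S2 : tar_adj e k S1 S2 ->
  [/\ forcing_counts #|S1 :&: X| #|S1 :&: ~: X|, #|S1 :&: X| + #|S1 :&: ~: X| <= k,
      forcing_counts #|S2 :&: X| #|S2 :&: ~: X|, #|S2 :&: X| + #|S2 :&: ~: X| <= k &
      (#|S1 :&: X| - #|S2 :&: X|) + (#|S2 :&: X| - #|S1 :&: X|) +
      (#|S1 :&: ~: X| - #|S2 :&: ~: X|) + (#|S2 :&: ~: X| - #|S1 :&: ~: X|) = 1].
Proof.
have step S x : x \in S ->
    (#|S :&: X| - #|(S :\ x) :&: X|) + (#|(S :\ x) :&: X| - #|S :&: X|) +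
    (#|S :&: ~: X| - #|(S :\ x) :&: ~: X|) + (#|(S :\ x) :&: ~: X| - #|S :&: ~: X|) = 1.
  move=> xS; have pos (A : {set T}) : x \in A -> 0 < #|S :&: A|.
    by move=> xA; apply/card_gt0P; exists x; rewrite inE xS.
  have [-> ->] := counts_setD1 xS; have := pos X; have := pos (~: X).
  by rewrite inE; case: (x \in X) => /=; lia.
case=> /psd_forcing_counts F1 + /psd_forcing_counts F2 + /symdiff_card1[x Dx].
rewrite (card_split S1) (card_split S2) => sz1 sz2; split=> //.
by case: Dx => [[xS ->]|[xS ->]]; have := step _ _ xS; lia.
Qed.

(* [X] is isolated in Z^+_m: deleting a vertex destroys forcing, adding one exceeds [m]. *)
Lemma not_tar_connected_at_m : ~ tar_connected e m.
Proof.
have /card_gt0P[x xX] : 0 < #|X| by lia.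
have /card_gt0P[y] : 0 < #|~: X| by lia.
rewrite inE => yX; set S := y |: (X :\ x).
have [aS bS] : #|S :&: X| = m.-1 /\ #|S :&: ~: X| = 1.
  have yXx : y \notin X :\ x by rewrite inE (negbTE yX) andbF.
  have [-> ->] := counts_setU1 yXx; have [-> ->] := counts_setD1 xX.
  by rewrite (negbTE yX) xX counts_X.1 counts_X.2 /=; lia.
have FS : psd_forcing_set e S by apply/psd_forcing_counts; rewrite aS bS /forcing_counts; lia.
apply: (tar_disconnected (I := fun S => m <= #|S :&: X|) _ psd_forcing_X _ _ FS).
- move=> S1 S2 /tar_adj_counts[F1 sz1 F2 sz2 step] aS1.
  have := counts_le S1; have := counts_le S2; move: F1 F2; rewrite /forcing_counts; lia.
- by rewrite card_X.
- by rewrite counts_X.1.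
- by rewrite card_split aS bS; lia.
- by rewrite aS; lia.
Qed.

(* Leaving [m.-1 <= a] means passing from [a = m.-1] to [a = m - 2]; forcing then needs
   [b >= n.-1], i.e. a set of size at least [maxn (m + n - 2) n.+1]. *)
Lemma not_tar_connected_below k : n <= k -> k < maxn (m + n - 2) n.+1 -> ~ tar_connected e k.
Proof.
move=> n_le_k k_lt.
apply: (tar_disconnected (I := fun S => m.-1 <= #|S :&: X|) _ psd_forcing_X _ _ psd_forcing_Xc).
- move=> S1 S2 /tar_adj_counts[F1 sz1 F2 sz2 step] aS1.
  have := counts_le S1; have := counts_le S2; move: F1 F2; rewrite /forcing_counts; lia.
- by rewrite card_X; lia.
- by rewrite counts_X.1; lia.
- by rewrite card_Xc.
- by rewrite counts_Xc.1; lia.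
Qed.

Lemma tar_connected_gt k : tar_connected e k -> m < k.
Proof.
move=> conn; have [[S [FS szS]] _] := conn.
have [_ /(_ S FS) m_le_S] := is_Zplus_complete_bipartite.
rewrite ltn_neqAle (leq_trans m_le_S szS) andbT.
by apply/eqP=> mk; apply: not_tar_connected_at_m; rewrite mk.
Qed.

Lemma is_z0plus_complete_bipartite : is_z0plus e (maxn (m + n - 2) n.+1).
Proof.
apply: is_z0plus_threshold; first lia.
  by move=> k k_ge; apply: tar_connected_complete_bipartite; lia.
by apply: not_tar_connected_below; lia.
Qed.

Lemma is_uz0plus_complete_bipartite : m.+1 < n -> is_uz0plus e m.+1.
Proof.
move=> lt_mn; split=> [|k]; last exact: tar_connected_gt.
by apply: tar_connected_complete_bipartite; lia.
Qed.

Lemma complete_bipartite_psd_parameters :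
  [/\ is_Zplus e m, is_Zplus_bar e n, is_z0plus e (maxn (m + n - 2) n.+1) &
      m.+1 < n -> is_uz0plus e m.+1].
Proof.
split; first exact: is_Zplus_complete_bipartite.
- exact: is_Zplus_bar_complete_bipartite.
- exact: is_z0plus_complete_bipartite.
- exact: is_uz0plus_complete_bipartite.
Qed.

End CompleteBipartiteCounts.

Section Kpq.
Variables p q : nat.

Definition Kpq_left : {set 'I_p + 'I_q} := [set inl i | i : 'I_p].

Lemma Kpq_complete_bipartite : complete_bipartite (Kpq p q) Kpq_left.
Proof.
have inl_left i : inl i \in Kpq_left by apply: imset_f.
have inr_left j : inr j \in Kpq_left = false by apply/negbTE/imsetP=> -[].
by case=> [i|j] [i'|j']; rewrite ?inl_left ?inr_left.
Qed.

Lemma card_Kpq_left : #|Kpq_left| = p.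
Proof. by rewrite card_imset ?card_ord //; exact: inl_inj. Qed.

Lemma card_Kpq_right : #|~: Kpq_left| = q.
Proof. by have := cardsC Kpq_left; rewrite card_Kpq_left card_sum !card_ord; lia. Qed.

Lemma Kpq_psd_parameters : 2 <= p -> p <= q ->
  [/\ is_Zplus (Kpq p q) p, is_Zplus_bar (Kpq p q) q,
      is_z0plus (Kpq p q) (maxn (p + q - 2) q.+1) &
      p.+1 < q -> is_uz0plus (Kpq p q) p.+1].
Proof.
move=> hp hpq; apply: complete_bipartite_psd_parameters hp (leq_trans hp hpq) hpq.
- exact: Kpq_complete_bipartite.
- exact: card_Kpq_left.
- exact: card_Kpq_right.
Qed.

End Kpq.

Theorem proposition4p8 (p q : nat) (hp : 2 <= p) (hpq : p <= q) :
  is_Zplus (Kpq p q) p /\ is_Zplus_bar (Kpq p q) q /\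
  (3 <= p -> is_z0plus (Kpq p q) (p + q - 2)) /\
  (4 <= p -> is_z0plus (Kpq p p) (2 * p - 2) /\
             forall zb, is_Zplus_bar (Kpq p p) zb -> zb + 1 < 2 * p - 2) /\
  (p = 2 -> 4 <= q -> is_uz0plus (Kpq 2 q) 3 /\ is_z0plus (Kpq 2 q) (q + 1)).
Proof.
have [Zp Zbar z0 uz0] := Kpq_psd_parameters hp hpq.
have [_ Zbar_pp z0_pp _] := Kpq_psd_parameters hp (leqnn p).
do 2!split=> //; split.
  by move=> p_ge3; rewrite (_ : p + q - 2 = maxn (p + q - 2) q.+1) //; lia.
split.
  move=> p_ge4; split; first by rewrite (_ : 2 * p - 2 = maxn (p + p - 2) p.+1) //; lia.
  by move=> zb /(is_Zplus_bar_unique Zbar_pp) <-; lia.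
move=> p2 q_ge4; subst p; split; first exact: uz0.
by rewrite (_ : q + 1 = maxn (2 + q - 2) q.+1) //; lia.
Qed.
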